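(* Let $A\in\mathbb{R}^{n\times n}$ be nonsingular, $B\in\mathbb{R}^{n\times m}$, $N\geq1$ an integer, $\Omega=\{x\in\mathbb{R}^n: Hx\leq h\}$ bounded with $H\in\mathbb{R}^{n_h\times n}$, $X=\{y\in\mathbb{R}^n:Fy\leq f\}$ with $F\in\mathbb{R}^{n_f\times n}$, and $U=\{v\in\mathbb{R}^m: Gv\leq g\}$ bounded with $G\in\mathbb{R}^{n_g\times m}$; suppose $0\in\Omega$, $0\in X$, $0\in U$. Let $\bar G$, $\bar H$ be the matrices defined in the context, let $\hat g=(0,g,\dots,g,f,\dots,f)$ and $\tilde g=(h,0,\dots,0)$ (vectors of the same length as the number of rows of $\bar G$, partitioned like $\bar g$ in the context), let $\beta$ be the optimal value of the linear program $$\min_{\gamma\geq 0,\ T\geq 0,\ M}\ \gamma\quad\text{s.t.}\quad T\bar H=\bar G M,\quad Th\leq\gamma\hat g+\tilde g,\quad \begin{bmatrix}I&0&\cdots&0\end{bmatrix}=\begin{bmatrix}I&0&\cdots&0\end{bmatrix}M,$$ and let $\alpha=\beta^{-1}$. For $k\in\{1,\dots,N\}$ let $$\Omega_k^x=\Big\{x\in X:\ \exists\,u_1,\dots,u_k\in U \text{ with } A^kx+\sum_{i=0}^{k-1}A^{k-1-i}Bu_{k-i}\in\alpha\Omega,\ \ A^jx+\sum_{i=0}^{j-1}A^{j-1-i}Bu_{j-i}\in X\ \forall j\in\{1,\dots,k\}\Big\},$$ and $\bar\Omega^x=\mathrm{co}\big(\bigcup_{k=1}^N\Omega_k^x\big)$.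 Then $\bar\Omega^x$ equals the set of all $x\in\mathbb{R}^n$ for which there exist $z_1,\dots,z_N\in\mathbb{R}^n$, vectors $v_{k,i}\in\mathbb{R}^m$ ($k\in\{1,\dots,N\}$, $i\in\{1,\dots,k\}$) and $\lambda=(\lambda_1,\dots,\lambda_N)\in\mathbb{R}^N$ such that $x=\sum_{k=1}^N z_k$; $HA^kz_k+\sum_{i=0}^{k-1}HA^{k-1-i}Bv_{k,k-i}\leq\alpha\lambda_k h$ for all $k$; $FA^jz_k+\sum_{i=0}^{j-1}FA^{j-1-i}Bv_{k,j-i}\leq\lambda_k f$ for all $j\in\{1,\dots,k\}$ and all $k$; $Fz_k\leq\lambda_k f$ for all $k$; $Gv_{k,i}\leq\lambda_k g$ for all $i\in\{1,\dots,k\}$ and all $k$; $\lambda\geq0$ and $\sum_{k=1}^N\lambda_k=1$.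
   Context: Vector inequalities are componentwise; $T\geq0$ means entrywise nonnegative; $\mathrm{co}$ denotes convex hull. With $\bar n=n+Nm$, column blocks of widths $n,m,\dots,m$ (state block, then input blocks $i=1,\dots,N$): $\bar H=[H\ 0\ \cdots\ 0]\in\mathbb{R}^{n_h\times\bar n}$, and $\bar G$ has the block rows: $[HA^N\ \ HB\ \ HAB\ \cdots\ HA^{N-1}B]$; then for $i=1,\dots,N$ a block row with $G$ in input block $i$ and zeros elsewhere; then for $j=N,N-1,\dots,1$ a block row with $FA^j$ in the state block and $FA^{i-1-(N-j)}B$ in input block $i$ if $i\geq N-j+1$, $0$ otherwise; then the block row $[F\ 0\ \cdots\ 0]$. The vector $\bar g$ partitions accordingly as $(h,g,\dots,g,f,\dots,f)$ with $g$ repeated $N$ times and $f$ repeated $N+1$ times; $\hat g$ and $\tilde g$ use this partition. The matrix $\begin{bmatrix}I&0&\cdots&0\end{bmatrix}\in\mathbb{R}^{n\times\bar n}$ with $I$ the $n\times n$ identity; $M\in\mathbb{R}^{\bar n\times\bar n}$ and $T$ has as many rows as $\bar G$ and $n_h$ columns. It is implicitly assumed that $\beta>0$ so that $\alpha$ is defined. *)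

From HB Require Import structures.
From mathcomp Require Import all_boot all_order all_algebra.
From mathcomp Require Import reals.
Set Implicit Arguments. Unset Strict Implicit. Unset Printing Implicit Defensive.
Import Order.TTheory GRing.Theory Num.Theory.
Local Open Scope ring_scope.

Section Defs.
Variable R : realType.

Definition mxle (p q : nat) (U V : 'M[R]_(p, q)) : Prop :=
  forall i j, U i j <= V i j.

Definition polyh (p q : nat) (M : 'M[R]_(p, q)) (b : 'cV[R]_p) (x : 'cV[R]_q) : Prop :=
  mxle (M *m x) b.

Definition bounded_cV (q : nat) (S : 'cV[R]_q -> Prop) : Prop :=
  exists K : R, forall x, S x -> forall i j, `|x i j| <= K.

Definition conv_hull (q : nat) (S : 'cV[R]_q -> Prop) (x : 'cV[R]_q) : Prop :=
  exists (p : nat) (mu : 'I_p -> R) (y : 'I_p -> 'cV[R]_q),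
    (forall i, 0 <= mu i) /\ \sum_(i < p) mu i = 1 /\
    (forall i, S (y i)) /\ x = \sum_(i < p) mu i *: y i.

(* nat-indexed access to matrix entries (0 outside the range) *)
Definition mxn (p q : nat) (M : 'M[R]_(p, q)) (i j : nat) : R :=
  match (insub i : option 'I_p), (insub j : option 'I_q) with
  | Some i', Some j' => M i' j'
  | _, _ => 0
  end.

Variables (n m nh nf ng N : nat).
Variables (A : 'M[R]_n) (B : 'M[R]_(n, m)) (H : 'M[R]_(nh, n))
          (F : 'M[R]_(nf, n)) (G : 'M[R]_(ng, m)).
Variables (h : 'cV[R]_nh) (f : 'cV[R]_nf) (g : 'cV[R]_ng).

Definition nbar := (n + N * m)%N.
Definition nrows := (nh + N * ng + N * nf + nf)%N.

(* Column c < n: state block; otherwise input block b+1 (0-based b = (c-n)/m)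
   with offset (c-n) mod m. *)
Definition barG_entry (r c : nat) : R :=
  let b := ((c - n) %/ m)%N in
  let oc := ((c - n) %% m)%N in
  if (r < nh)%N then
    (if (c < n)%N then mxn (H *m A ^+ N) r c
     else mxn (H *m A ^+ b *m B) r oc)
  else if (r < nh + N * ng)%N then
    let r1 := (r - nh)%N in
    let blk := (r1 %/ ng)%N in
    let o := (r1 %% ng)%N in
    (if (c < n)%N then 0 else if b == blk then mxn G o oc else 0)
  else if (r < nh + N * ng + N * nf)%N then
    let r2 := (r - nh - N * ng)%N in
    let t := (r2 %/ nf)%N in          (* block row j = N - t *)
    let o := (r2 %% nf)%N in
    (if (c < n)%N then mxn (F *m A ^+ (N - t)) o c
     else if (t <= b)%N then mxn (F *m A ^+ (b - t) *m B) o oc else 0)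
  else
    let r3 := (r - nh - N * ng - N * nf)%N in
    (if (c < n)%N then mxn F r3 c else 0).

Definition barG : 'M[R]_(nrows, nbar) := \matrix_(r, c) barG_entry r c.

Definition barH : 'M[R]_(nh, nbar) :=
  \matrix_(r, c) (if (c < n)%N then mxn H r c else 0).

Definition hatg : 'cV[R]_nrows :=
  \col_r (if (r < nh)%N then 0
          else if (r < nh + N * ng)%N then mxn g ((r - nh) %% ng) 0
          else mxn f ((r - nh - N * ng) %% nf) 0).

Definition tildeg : 'cV[R]_nrows :=
  \col_r (if (r < nh)%N then mxn h r 0 else 0).

Definition Esel : 'M[R]_(n, nbar) := \matrix_(i, j) ((i : nat) == j)%:R.

Definition LP_feasible (gamma : R) (T : 'M[R]_(nrows, nh)) (M : 'M[R]_nbar) : Prop :=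
  0 <= gamma /\ mxle 0 T /\ T *m barH = barG *m M /\
  mxle (T *m h) (gamma *: hatg + tildeg) /\ Esel = Esel *m M.

Definition LP_optimal_value (beta : R) : Prop :=
  (exists T M, LP_feasible beta T M) /\
  (forall gamma T M, LP_feasible gamma T M -> beta <= gamma).

Definition traj (x : 'cV[R]_n) (u : nat -> 'cV[R]_m) (j : nat) : 'cV[R]_n :=
  A ^+ j *m x + \sum_(i < j) A ^+ (j - 1 - i) *m B *m u (j - i)%N.

Definition scaled_set (a : R) (S : 'cV[R]_n -> Prop) (z : 'cV[R]_n) : Prop :=
  exists y, S y /\ z = a *: y.

Definition Omega_kx (alpha : R) (k : nat) (x : 'cV[R]_n) : Prop :=
  polyh F f x /\
  exists u : nat -> 'cV[R]_m,
    (forall i, (1 <= i <= k)%N -> polyh G g (u i)) /\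
    scaled_set alpha (polyh H h) (traj x u k) /\
    (forall j, (1 <= j <= k)%N -> polyh F f (traj x u j)).

Definition Omega_union (alpha : R) (x : 'cV[R]_n) : Prop :=
  exists k, (1 <= k <= N)%N /\ Omega_kx alpha k x.

End Defs.

From mathcomp Require Import all_boot all_order all_algebra.
From mathcomp Require Import reals.
From mathcomp Require Import boolp lra.
Import Order.TTheory GRing.Theory Num.Theory.
Local Open Scope ring_scope.
Set Implicit Arguments. Unset Strict Implicit.

(* The right-hand side is the disjunctive-programming (Balas) lifting of the
   convex hull of the union of the sets Omega_k: a point lies in it iff it is
   a sum of points z_k taken from the cones over Omega_k at heights lam_k,
   with the heights summing to 1.  A piece with lam_k > 0 rescales to a point
   of Omega_k.  A piece with lam_k = 0 lies in the recession cone of the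
   lifted set, which is trivial because Omega and U are bounded and A is
   invertible; so it contributes z_k = 0. *)

Section MatrixOrder.
Variable R : realType.

Lemma mxle_sum (p q : nat) (I : finType) (P : pred I) (a b : I -> 'M[R]_(p, q)) :
  (forall i, P i -> mxle (a i) (b i)) ->
  mxle (\sum_(i | P i) a i) (\sum_(i | P i) b i).
Proof. by move=> le_ab r c; rewrite !summxE; apply: ler_sum => i /le_ab. Qed.

Lemma mxleZ (p q : nat) (c : R) (a b : 'M[R]_(p, q)) :
  0 <= c -> mxle a b -> mxle (c *: a) (c *: b).
Proof. by move=> c_ge0 le_ab r s; rewrite !mxE ler_wpM2l. Qed.

Lemma mxleVZ (p q : nat) (c : R) (a b : 'M[R]_(p, q)) :
  0 < c -> mxle a (c *: b) -> mxle (c^-1 *: a) b.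
Proof.
move=> c_gt0 le_ab.
have Vc_ge0 : 0 <= c^-1 by rewrite invr_ge0 ltW.
have := mxleZ Vc_ge0 le_ab.
by rewrite scalerA mulVf ?scale1r // gt_eqF.
Qed.

Lemma polyhZ (p q : nat) (M : 'M[R]_(p, q)) b c y :
  0 <= c -> polyh M b y -> mxle (M *m (c *: y)) (c *: b).
Proof. by move=> c_ge0 My; rewrite -scalemxAr; apply: mxleZ. Qed.

Lemma polyhVZ (p q : nat) (M : 'M[R]_(p, q)) b c y :
  0 < c -> mxle (M *m y) (c *: b) -> polyh M b (c^-1 *: y).
Proof. by move=> c_gt0 My; rewrite /polyh -scalemxAr; apply: mxleVZ. Qed.

(* Moving from a point y0 of the polyhedron along a recession direction d
   stays inside it, so boundedness forces d = 0. *)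
Lemma bounded_polyh_recession0 (p q : nat) (M : 'M[R]_(p, q)) b (y0 d : 'cV[R]_q) :
  polyh M b y0 -> bounded_cV (polyh M b) -> mxle (M *m d) 0 -> d = 0.
Proof.
move=> My0 [K boundK] Md; apply/matrixP => i j; rewrite mxE.
have [//|dij_neq0] := eqVneq (d i j) 0; exfalso.
have dij_gt0 : 0 < `|d i j| by rewrite normr_gt0.
set t := (`|K| + `|y0 i j| + 1) / `|d i j|.
have t_gt0 : 0 < t.
  by rewrite divr_gt0 //; have := normr_ge0 K; have := normr_ge0 (y0 i j); lra.
have /boundK/(_ i j) : polyh M b (y0 + t *: d).
  move=> r c; apply: le_trans (My0 r c); rewrite mulmxDr -scalemxAr.
  rewrite mxE [X in _ + X <= _]mxE gerDl pmulr_rle0 //.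
  by apply: le_trans (Md r c) _; rewrite mxE.
rewrite !mxE addrC; have := lerB_normD (t * d i j) (y0 i j).
rewrite normrM (gtr0_norm t_gt0) divfK ?gt_eqF //.
have := ler_norm K; lra.
Qed.

Lemma expmx_mulmx_eq0 (n : nat) (A : 'M[R]_n) (k : nat) (z : 'cV[R]_n) :
  A \in unitmx -> A ^+ k *m z = 0 -> z = 0.
Proof.
move=> A_unit; elim: k z => [|k IHk] z; first by rewrite expr0 mul1mx.
rewrite exprSr -mulmxE -mulmxA => /IHk Az0.
by rewrite -(mulKmx A_unit z) Az0 mulmx0.
Qed.

End MatrixOrder.

Section Trajectory.
Variables (R : realType) (n m : nat) (A : 'M[R]_n) (B : 'M[R]_(n, m)).

Lemma mulmx_traj (p : nat) (P : 'M[R]_(p, n)) x u j :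
  P *m traj A B x u j =
  P *m A ^+ j *m x + \sum_(i < j) P *m A ^+ (j - 1 - i) *m B *m u (j - i)%N.
Proof.
rewrite /traj mulmxDr mulmx_sumr mulmxA; congr (_ + _).
by apply: eq_bigr => i _; rewrite !mulmxA.
Qed.

Lemma trajZ (c : R) x u j :
  traj A B (c *: x) (fun i => c *: u i) j = c *: traj A B x u j.
Proof.
rewrite /traj scalerDr scalemxAr scaler_sumr; congr (_ + _).
by apply: eq_bigr => i _; rewrite scalemxAr.
Qed.

Lemma traj0 j : traj A B 0 (fun _ => 0) j = 0.
Proof. by have := trajZ 0 0 (fun _ => 0) j; rewrite !scale0r. Qed.

Lemma traj_sum (I : finType) (P : pred I) x u j :
  traj A B (\sum_(i | P i) x i) (fun l => \sum_(i | P i) u i l) j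
  = \sum_(i | P i) traj A B (x i) (u i) j.
Proof.
rewrite /traj big_split /= mulmx_sumr; congr (_ + _).
under eq_bigr do rewrite mulmx_sumr.
by rewrite exchange_big.
Qed.

End Trajectory.

Lemma sum_nat_partition (V : nmodType) (p N : nat) (kf : 'I_p -> nat)
    (F : 'I_p -> V) :
  (forall i, (1 <= kf i <= N)%N) ->
  \sum_(1 <= k < N.+1) \sum_(i | kf i == k) F i = \sum_i F i.
Proof.
move=> kf_range; rewrite (exchange_big_dep xpredT) //=; apply: eq_bigr => i _.
rewrite big_mkcond (bigD1_seq (kf i)) ?iota_uniq ?mem_index_iota ?ltnS ?kf_range //=.
by rewrite eqxx big1 ?addr0 // => k /negbTE; rewrite eq_sym => ->.
Qed.

Section Lifting.
Variables (R : realType) (n m nh nf ng : nat).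
Variables (A : 'M[R]_n) (B : 'M[R]_(n, m)) (H : 'M[R]_(nh, n))
          (F : 'M[R]_(nf, n)) (G : 'M[R]_(ng, m)).
Variables (h : 'cV[R]_nh) (f : 'cV[R]_nf) (g : 'cV[R]_ng) (alpha : R).
Hypothesis alpha_gt0 : 0 < alpha.

(* Homogenization of the polyhedron {(x, u) | u witnesses x \in Omega_k^x}:
   for lam > 0 it says (z, v) = lam (x, u); at lam = 0 it is the recession
   cone of that polyhedron. *)
Definition Omega_cone (k : nat) (lam : R) (z : 'cV[R]_n) (v : nat -> 'cV[R]_m) :=
  [/\ mxle (H *m traj A B z v k) ((alpha * lam) *: h),
      forall j, (1 <= j <= k)%N -> mxle (F *m traj A B z v j) (lam *: f),
      mxle (F *m z) (lam *: f) &
      forall i, (1 <= i <= k)%N -> mxle (G *m v i) (lam *: g)].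

Lemma Omega_coneZ k c lam z v : 0 <= c ->
  Omega_cone k lam z v ->
  Omega_cone k (c * lam) (c *: z) (fun i => c *: v i).
Proof.
move=> c_ge0 [coneH coneF coneF0 coneG]; split.
- by rewrite trajZ mulrCA -scalerA; apply: polyhZ.
- by move=> j jk; rewrite trajZ -scalerA; apply: polyhZ => //; apply: coneF.
- by rewrite -scalerA; apply: polyhZ.
- by move=> i ik; rewrite -scalerA; apply: polyhZ => //; apply: coneG.
Qed.

Lemma Omega_cone_sum k (I : finType) (P : pred I) lam z v :
  (forall i, P i -> Omega_cone k (lam i) (z i) (v i)) ->
  Omega_cone k (\sum_(i | P i) lam i) (\sum_(i | P i) z i)
               (fun l => \sum_(i | P i) v i l).
Proof.
move=> cone; split.
- rewrite traj_sum mulmx_sumr mulr_sumr scaler_suml.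
  by apply: mxle_sum => i /cone [].
- move=> j jk; rewrite traj_sum mulmx_sumr scaler_suml.
  by apply: mxle_sum => i /cone [_ coneF _ _]; apply: coneF.
- by rewrite mulmx_sumr scaler_suml; apply: mxle_sum => i /cone [].
- move=> l lk; rewrite mulmx_sumr scaler_suml.
  by apply: mxle_sum => i /cone [_ _ _ coneG]; apply: coneG.
Qed.

Lemma Omega_kx_cone k x :
  Omega_kx A B H F G h f g alpha k x -> exists u, Omega_cone k 1 x u.
Proof.
move=> [Fx [u [Gu [[y [Hy traj_eq]] Fu]]]]; exists u; split=> //.
- by rewrite traj_eq mulr1; apply: polyhZ => //; apply: ltW.
- by move=> j /Fu; rewrite scale1r.
- by rewrite scale1r.
- by move=> i /Gu; rewrite scale1r.
Qed.

Lemma Omega_cone_Omega_kx k lam z v : 0 < lam ->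
  Omega_cone k lam z v -> Omega_kx A B H F G h f g alpha k (lam^-1 *: z).
Proof.
move=> lam_gt0 [coneH coneF coneF0 coneG].
split; first exact: polyhVZ.
exists (fun i => lam^-1 *: v i); rewrite trajZ; split; [|split].
- by move=> i /coneG; apply: polyhVZ.
- exists ((alpha * lam)^-1 *: traj A B z v k); split.
    by apply: polyhVZ => //; apply: mulr_gt0.
  by rewrite scalerA invfM mulrA mulfV ?mul1r // gt_eqF.
- by move=> j jk; rewrite trajZ; apply: polyhVZ => //; apply: coneF.
Qed.

Lemma Omega_kx0 k :
  polyh H h 0 -> polyh F f 0 -> polyh G g 0 ->
  Omega_kx A B H F G h f g alpha k 0.
Proof.
move=> H0 F0 G0; split=> //; exists (fun _ => 0); split=> //.
rewrite traj0; split; first by exists 0; rewrite scaler0.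
by move=> j _; rewrite traj0.
Qed.

Lemma Omega_cone0 k z v :
  A \in unitmx -> polyh H h 0 -> bounded_cV (polyh H h) ->
  polyh G g 0 -> bounded_cV (polyh G g) ->
  Omega_cone k 0 z v -> z = 0.
Proof.
move=> A_unit H0 boundedH G0 boundedG [coneH _ _ coneG].
have v0 i : (1 <= i <= k)%N -> v i = 0.
  by move/coneG; rewrite scale0r; apply: bounded_polyh_recession0 G0 boundedG.
move: coneH; rewrite mulmx_traj big1 => [|i _]; last first.
  by rewrite v0 ?mulmx0 // subn_gt0 ltn_ord leq_subr.
rewrite addr0 mulr0 scale0r -mulmxA => /(bounded_polyh_recession0 H0 boundedH).
exact: expmx_mulmx_eq0.
Qed.

Variable N : nat.

Lemma conv_hull_Omega_lift x :
  conv_hull (Omega_union N A B H F G h f g alpha) x ->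
  exists (z : nat -> 'cV[R]_n) (v : nat -> nat -> 'cV[R]_m) (lam : nat -> R),
    [/\ x = \sum_(1 <= k < N.+1) z k,
        forall k, (1 <= k <= N)%N -> Omega_cone k (lam k) (z k) (v k) /\ 0 <= lam k
      & \sum_(1 <= k < N.+1) lam k = 1].
Proof.
move=> [p [mu [y [mu_ge0 [mu_sum1 [y_in ->]]]]]].
have /choice [ku ku_spec] : forall i, exists ku : nat * (nat -> 'cV[R]_m),
    (1 <= ku.1 <= N)%N /\ Omega_cone ku.1 1 (y i) ku.2.
  move=> i; have [k [kN /Omega_kx_cone [u cone_u]]] := y_in i.
  by exists (k, u).
pose kf i := (ku i).1.
have kf_range i : (1 <= kf i <= N)%N by case: (ku_spec i).
exists (fun k => \sum_(i | kf i == k) mu i *: y i),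
       (fun k l => \sum_(i | kf i == k) mu i *: (ku i).2 l),
       (fun k => \sum_(i | kf i == k) mu i).
split; [by rewrite sum_nat_partition | move=> k _ | by rewrite sum_nat_partition].
split; last by apply: sumr_ge0 => i _.
under eq_bigr do rewrite -[mu _]mulr1.
apply: Omega_cone_sum => i /eqP <-.
by apply: Omega_coneZ => //; case: (ku_spec i).
Qed.

Lemma Omega_lift_conv_hull (z : nat -> 'cV[R]_n) (v : nat -> nat -> 'cV[R]_m)
    (lam : nat -> R) :
  A \in unitmx -> polyh H h 0 -> bounded_cV (polyh H h) ->
  polyh F f 0 -> polyh G g 0 -> bounded_cV (polyh G g) ->
  (forall k, (1 <= k <= N)%N -> Omega_cone k (lam k) (z k) (v k) /\ 0 <= lam k) ->
  \sum_(1 <= k < N.+1) lam k = 1 ->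
  conv_hull (Omega_union N A B H F G h f g alpha) (\sum_(1 <= k < N.+1) z k).
Proof.
move=> A_unit H0 boundedH F0 G0 boundedG cone lam_sum1.
have kN (i : 'I_N) : (1 <= i.+1 <= N)%N by rewrite ltn_ord.
exists N, (fun i => lam i.+1),
  (fun i => if lam i.+1 == 0 then 0 else (lam i.+1)^-1 *: z i.+1).
split; first by move=> i; case: (cone _ (kN i)).
split; first by rewrite big_add1 big_mkord in lam_sum1.
split=> [i|]; last first.
  rewrite big_add1 big_mkord; apply: eq_bigr => i _.
  have [lam0|lam_neq0] := eqVneq (lam i.+1) 0; last first.
    by rewrite scalerA mulfV ?scale1r.
  rewrite lam0 scale0r; case: (cone _ (kN i)) => + _; rewrite lam0.
  exact: Omega_cone0.
exists i.+1; split=> //; case: (cone _ (kN i)) => cone_i lam_ge0.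
have [_|lam_neq0] := eqVneq (lam i.+1) 0; first exact: Omega_kx0.
by apply: Omega_cone_Omega_kx cone_i; rewrite lt_def lam_neq0.
Qed.

End Lifting.

Theorem theorem3 (R : realType) (n m nh nf ng N : nat)
  (A : 'M[R]_n) (B : 'M[R]_(n, m)) (H : 'M[R]_(nh, n)) (h : 'cV[R]_nh)
  (F : 'M[R]_(nf, n)) (f : 'cV[R]_nf) (G : 'M[R]_(ng, m)) (g : 'cV[R]_ng)
  (beta : R) :
  A \in unitmx ->
  (1 <= N)%N ->
  bounded_cV (polyh H h) ->
  bounded_cV (polyh G g) ->
  polyh H h 0 -> polyh F f 0 -> polyh G g 0 ->
  LP_optimal_value N A B H F G h f g beta ->
  0 < beta ->
  let alpha := beta^-1 in
  forall x : 'cV[R]_n,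
    conv_hull (Omega_union N A B H F G h f g alpha) x <->
    exists (z : nat -> 'cV[R]_n) (v : nat -> nat -> 'cV[R]_m) (lam : nat -> R),
      x = \sum_(1 <= k < N.+1) z k /\
      (forall k, (1 <= k <= N)%N ->
         mxle (H *m A ^+ k *m z k
               + \sum_(i < k) H *m A ^+ (k - 1 - i) *m B *m v k (k - i)%N)
              ((alpha * lam k) *: h)) /\
      (forall k j, (1 <= k <= N)%N -> (1 <= j <= k)%N ->
         mxle (F *m A ^+ j *m z k
               + \sum_(i < j) F *m A ^+ (j - 1 - i) *m B *m v k (j - i)%N)
              (lam k *: f)) /\
      (forall k, (1 <= k <= N)%N -> mxle (F *m z k) (lam k *: f)) /\
      (forall k i, (1 <= k <= N)%N -> (1 <= i <= k)%N ->
         mxle (G *m v k i) (lam k *: g)) /\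
      (forall k, (1 <= k <= N)%N -> 0 <= lam k) /\
      \sum_(1 <= k < N.+1) lam k = 1.
Proof.
move=> A_unit _ boundedH boundedG H0 F0 G0 _ beta_gt0 alpha x.
have alpha_gt0 : 0 < alpha by rewrite invr_gt0.
split.
  move=> /(conv_hull_Omega_lift alpha_gt0) [z [v [lam [-> cone lam_sum1]]]].
  exists z, v, lam; do !split; last exact: lam_sum1.
  - by move=> k /cone [[+ _ _ _] _]; rewrite mulmx_traj.
  - by move=> k j /cone [[_ coneF _ _] _] /coneF; rewrite mulmx_traj.
  - by move=> k /cone [[]].
  - by move=> k i /cone [[_ _ _ coneG] _] /coneG.
  - by move=> k /cone [].
move=> [z [v [lam [-> [coneH [coneF [coneF0 [coneG [lam_ge0 lam_sum1]]]]]]]]].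
apply: (Omega_lift_conv_hull alpha_gt0 A_unit H0 boundedH F0 G0 boundedG _ lam_sum1).
move=> k kN; split; last exact: lam_ge0.
split.
- by rewrite mulmx_traj; apply: coneH.
- by move=> j jk; rewrite mulmx_traj; apply: coneF.
- exact: coneF0.
- by move=> i; apply: coneG.
Qed.
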